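(* Let $\ell\geqslant 1$ be real. Assume $x\geqslant\exp\left(7^{28}(12e\ell)^{28\log(192e\ell)}\right)$ and $z\geqslant x^{\frac{1}{3\ell}}$. Then $$\#\{n\leqslant z:\ P^+(n)<\log x\,\log\log x\}<z^{1/4}.$$
   Context: $n$ ranges over positive integers; $P^+(n)$ denotes the largest prime factor of $n$ (with $P^+(1)=1$). *)

From Stdlib Require Import Reals.
From mathcomp Require Import all_boot.

(* P^+(n): largest prime factor of n, with P^+(1) = 1 (mathcomp's max_pdiv). *)
Definition Pbig (n : nat) : nat := max_pdiv n.

(* #{ n positive integer : n <= z /\ P n }.  Every positive integer n <= z
   lies in iota 1 (Z.to_nat (up z)) since n <= z < up z. *)
Definition count_upto (z : R) (P : nat -> bool) : nat :=
  size [seq n <- iota 1 (Z.to_nat (up z)) |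
         (if Rle_dec (INR n) z then true else false) && P n].

From Stdlib Require Import Reals Lra Lia ZArith.
From mathcomp Require Import all_boot.

(* Let Psi(N, q) count the n <= N all of whose prime factors are < q.  Sorting
   the n <= N by whether the prime q divides them gives the Buchstab-type
   recursion Psi(N, q + 1) = Psi(N, q) + Psi(N / q, q + 1), and a double
   induction on q and N turns it into the Rankin-type bound
   Psi(N, q) <= exp(13 B(q)) N^(1/8) for every weight with
   B(q + 1) - B(q) >= q^(-1/8), because exp(13 t) (1 - t) >= 1 on
   [0, 2^(-1/8)].  For the capped weight B(q) = min(q, W) + q W^(-1/8) with
   W ~ (log x)^(1/2) and q ~ log x log log x, exp(13 B(q)) is
   exp(O((log x)^(15/16) log log x)), which is below z^(1/8) as soon as
   log z >= log x / (3 l) and log log x >= 28 (5 + log l) (3 + log l); the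
   latter is what the size assumption on x provides. *)

Definition smooth_count (q N : nat) : nat := count (fun n => max_pdiv n < q) (iota 1 N).

Lemma iota1S N : iota 1 N.+1 = rcons (iota 1 N) N.+1.
Proof. by rewrite -cats1 -{1}[N.+1]addn1 iotaD add1n. Qed.

Lemma count_split_pred (T : Type) (a b : pred T) s :
  count a s = count (predI a (predC b)) s + count (predI b a) s.
Proof.
by elim: s => //= x s ->; case: (a x); case: (b x); rewrite /= ?add0n ?addnS ?addnA.
Qed.

Lemma count_iota_dvd d (P : pred nat) N : 0 < d ->
  count (predI (dvdn d) P) (iota 1 N) = count (P \o muln d) (iota 1 (N %/ d)).
Proof.
move=> d_gt0; elim: N => [|N IH]; first by rewrite div0n.
rewrite iota1S -cats1 count_cat IH.
case: (boolP (d %| N.+1)) => [dvd_dN | ndvd_dN].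
  have NdS : N.+1 %/ d = (N %/ d).+1 by rewrite divnS // dvd_dN.
  by rewrite NdS iota1S -cats1 count_cat /= -NdS mulnC divnK // dvd_dN.
by rewrite /= divnS // (negbTE ndvd_dN) /= !addn0.
Qed.

Lemma max_pdiv_gt1_prime n : 1 < max_pdiv n -> prime (max_pdiv n).
Proof. by case: n => [|[|n]] // _; exact: max_pdiv_prime. Qed.

Lemma max_pdiv_lt_all n Q : 1 < Q -> (max_pdiv n < Q) = all (fun p => p < Q) (primes n).
Proof.
move=> Q_gt1; case: (leqP n 1) => [|n_gt1]; first by case: n => [|[|]].
apply/idP/allP => [lt_nQ p p_n | lt_pQ].
- by apply: leq_ltn_trans lt_nQ; apply: max_pdiv_max.
- by apply: lt_pQ; rewrite mem_primes max_pdiv_prime // ltnW // max_pdiv_dvd.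
Qed.

Lemma max_pdiv_mul_lt p m Q : prime p -> p < Q -> 0 < m ->
  (max_pdiv (p * m) < Q) = (max_pdiv m < Q).
Proof.
move=> p_pr p_lt_Q m_gt0; have Q_gt1 := ltn_trans (prime_gt1 p_pr) p_lt_Q.
have primes_pm : primes (p * m) =i primes p ++ primes m.
  by move=> r; rewrite mem_cat primesM // prime_gt0.
by rewrite !max_pdiv_lt_all // (eq_all_r primes_pm) all_cat primes_prime //= p_lt_Q.
Qed.

Lemma smooth_count2 N : smooth_count 2 N <= 1.
Proof.
rewrite /smooth_count (eq_in_count (a2 := pred1 1)) ?count_uniq_mem ?iota_uniq ?leq_b1 //.
move=> n; rewrite mem_iota => /andP [n_gt0 _] /=.
case: (ltngtP n 1) => [|n_gt1 | -> //]; first by rewrite ltnNge n_gt0.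
by rewrite ltnNge prime_gt1 ?max_pdiv_prime // eq_sym ltn_eqF.
Qed.

Lemma smooth_countS_nonprime q N : 1 < q -> ~~ prime q ->
  smooth_count q.+1 N = smooth_count q N.
Proof.
move=> q_gt1 q_npr; apply: eq_count => n /=; rewrite ltnS leq_eqVlt.
case: eqP => //= pn_q; move: q_npr; rewrite -pn_q in q_gt1 *.
by rewrite max_pdiv_gt1_prime.
Qed.

Lemma smooth_countS_prime q N : prime q ->
  smooth_count q.+1 N = smooth_count q N + smooth_count q.+1 (N %/ q).
Proof.
move=> q_pr; rewrite /smooth_count (count_split_pred _ _ (dvdn q)).
congr (_ + _); last first.
  rewrite count_iota_dvd ?prime_gt0 //; apply: eq_in_count => m.
  by rewrite mem_iota => /andP [m_gt0 _] /=; rewrite max_pdiv_mul_lt.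
apply: eq_in_count => n; rewrite mem_iota => /andP [n_gt0 _] /=.
case: (boolP (q %| n)) => [q_n | nq_n] /=.
  by rewrite andbF ltnNge max_pdiv_max // mem_primes q_pr n_gt0.
rewrite andbT ltnS leq_eqVlt; case: eqP => // pn_q.
by move: nq_n; rewrite -pn_q max_pdiv_dvd.
Qed.

Open Scope R_scope.

Lemma exp_le x y : x <= y -> exp x <= exp y.
Proof. by case/Rle_lt_or_eq_dec => [/exp_increasing/Rlt_le | ->] //; exact: Rle_refl. Qed.

Lemma ln_le x y : 0 < x -> x <= y -> ln x <= ln y.
Proof.
by move=> x_gt0; case/Rle_lt_or_eq_dec => [/(ln_increasing _ _ x_gt0)/Rlt_le | ->] //; exact: Rle_refl.
Qed.

Lemma ln_ge0 a : 1 <= a -> 0 <= ln a.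
Proof. by move=> a_ge1; rewrite -ln_1; apply: ln_le; lra. Qed.

Lemma exp_le_ln r a : exp r <= a -> r <= ln a.
Proof. by move=> le_ra; rewrite -[r]ln_exp; apply: ln_le => //; exact: exp_pos. Qed.

Lemma ln_le_sub1 t : 0 < t -> ln t <= t - 1.
Proof. by move=> t_gt0; have := exp_ineq1_le (ln t); rewrite exp_ln //; lra. Qed.

(* Stdlib's [ln] is [0] off [(0, +oo)], so that [Rpower 0 s = 1]. *)
Lemma ln_0 : ln 0 = 0.
Proof. by rewrite /ln; case: Rlt_dec => // h; case: (Rlt_irrefl _ h). Qed.

Lemma Rpower_pos a s : 0 < Rpower a s.
Proof. exact: exp_pos. Qed.

Lemma Rpower_ge1 a s : 0 <= s -> 1 <= a -> 1 <= Rpower a s.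
Proof.
move=> s_ge0 a_ge1; rewrite /Rpower -exp_0; apply: exp_le; apply: Rmult_le_pos => //.
exact: ln_ge0.
Qed.

Lemma Rpower_opp_le a b s : 0 <= s -> 0 < a <= b -> Rpower b (- s) <= Rpower a (- s).
Proof.
move=> s_ge0 ab; rewrite !Rpower_Ropp; apply: Rinv_le_contravar; first exact: Rpower_pos.
exact: Rle_Rpower_l.
Qed.

Lemma Rpower_opp_le1 a s : 0 <= s -> 1 <= a -> Rpower a (- s) <= 1.
Proof.
move=> s_ge0 a_ge1; rewrite Rpower_Ropp -Rinv_1; apply: Rinv_le_contravar; first lra.
exact: Rpower_ge1.
Qed.

Lemma Rpower_INR0 s : Rpower (INR 0) s = 1.
Proof. by rewrite /Rpower /= ln_0 Rmult_0_r exp_0. Qed.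

Lemma Rpower_INR_ge1 (N : nat) s : 0 <= s -> 1 <= Rpower (INR N) s.
Proof.
move=> s_ge0; case: N => [|N]; first by rewrite Rpower_INR0; exact: Rle_refl.
by apply: Rpower_ge1 => //; rewrite S_INR; have := pos_INR N; lra.
Qed.

Lemma Rpower_INR_le (N : nat) s z : 0 <= s -> 1 <= z -> INR N <= z ->
  Rpower (INR N) s <= Rpower z s.
Proof.
move=> s_ge0 z_ge1; case: N => [|N] Nz; first by rewrite Rpower_INR0; exact: Rpower_ge1.
by apply: Rle_Rpower_l => //; split=> //; apply: lt_0_INR; lia.
Qed.

Lemma Rpower_INR_divn (N q : nat) s : 0 <= s -> (0 < N %/ q)%N ->
  Rpower (INR (N %/ q)) s <= Rpower (INR N) s * Rpower (INR q) (- s).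
Proof.
move=> s_ge0 Nq_gt0; have q_gt0 : (0 < q)%N by case: q Nq_gt0 => //; rewrite divn0.
have INR_gt0 n : (0 < n)%N -> 0 < INR n by move=> n_gt0; apply/lt_0_INR/ltP.
rewrite Rpower_Ropp; apply: (Rmult_le_reg_r (Rpower (INR q) s)); first exact: Rpower_pos.
rewrite Rmult_assoc Rinv_l ?Rmult_1_r; last exact/Rgt_not_eq/Rpower_pos.
rewrite Rpower_mult_distr; try exact: INR_gt0.
apply: Rle_Rpower_l => //; split.
  by rewrite -mult_INR; apply/INR_gt0; rewrite muln_gt0 Nq_gt0.
by rewrite -mult_INR; apply/le_INR/leP; exact: leq_divM.
Qed.

Lemma INR_ge1 (n : nat) : (1 <= n)%N -> 1 <= INR n.
Proof. by move=> n_ge1; apply/(le_INR 1)/leP. Qed.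

Lemma INR_up r : 0 <= r -> INR (Z.to_nat (up r)) = IZR (up r).
Proof.
move=> r_ge0; rewrite INR_IZR_INZ Z2Nat.id //.
by apply: le_IZR; have := archimed r; lra.
Qed.

Lemma exists_nat_between r : 0 <= r -> exists n : nat, r < INR n <= r + 1.
Proof. by move=> r_ge0; exists (Z.to_nat (up r)); rewrite INR_up //; have := archimed r; lra. Qed.

Lemma count_upto_iota z : 0 <= z ->
  exists N : nat, INR N <= z /\ forall P : pred nat, count_upto z P = count P (iota 1 N).
Proof.
move=> z_ge0; have := INR_up _ z_ge0; have := archimed z; rewrite /count_upto.
case: (Z.to_nat (up z)) => [|N] [up_gt up_le] INR_M; first by rewrite /= in INR_M; lra.
rewrite S_INR in INR_M; exists N; split=> [|P]; first lra.
rewrite size_filter iota1S -cats1 count_cat (eq_in_count (a2 := pred0) (s := [:: N.+1])).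
  rewrite count_pred0 addn0; apply: eq_in_count => n; rewrite mem_iota => /andP [_ lt_n_N].
  case: Rle_dec => // nle_nz; exfalso; apply: nle_nz.
  apply: Rle_trans (_ : INR N <= z); last lra.
  by apply/le_INR/leP; rewrite -ltnS -add1n.
move=> n; rewrite inE => /eqP ->.
have M_gt_z : ~ INR N.+1 <= z by rewrite S_INR; lra.
by case: Rle_dec => // le_Mz; case: (M_gt_z le_Mz).
Qed.

Lemma smooth_count_prime_step s q (C C' : R) : prime q -> 0 <= s -> 0 <= C' ->
  (forall N, INR (smooth_count q N) <= C * Rpower (INR N) s) ->
  C <= C' * (1 - Rpower (INR q) (- s)) ->
  forall N, INR (smooth_count q.+1 N) <= C' * Rpower (INR N) s.
Proof.
move=> q_pr s_ge0 C'_ge0 bound_q C_le; elim/ltn_ind => N IH.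
have tail : INR (smooth_count q.+1 (N %/ q)) <= C' * Rpower (INR N) s * Rpower (INR q) (- s).
  case: (posnP (N %/ q)) => [-> | Nq_gt0].
    by apply: Rmult_le_pos; [apply: Rmult_le_pos => //|]; apply/Rlt_le/Rpower_pos.
  apply: Rle_trans (IH _ _) _.
  - by apply: ltn_Pdiv; [exact: prime_gt1 | apply: leq_trans Nq_gt0 _; exact: leq_div].
  - by rewrite Rmult_assoc; apply: Rmult_le_compat_l => //; exact: Rpower_INR_divn.
rewrite smooth_countS_prime // plus_INR; have := bound_q N.
have := Rpower_pos (INR N) s; have := Rpower_pos (INR q) (- s); nra.
Qed.

Lemma smooth_count_le_Rpower s (g : nat -> R) : 0 <= s -> 1 <= g 2%N ->
  (forall q, (2 <= q)%N -> g q <= g q.+1 * (1 - Rpower (INR q) (- s))) ->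
  forall q N, (2 <= q)%N -> INR (smooth_count q N) <= g q * Rpower (INR N) s.
Proof.
move=> s_ge0 g2_ge1 gS.
suff bound q : (2 <= q)%N ->
    1 <= g q /\ forall N, INR (smooth_count q N) <= g q * Rpower (INR N) s.
  by move=> q N /bound [].
elim: q => // q IHq; rewrite ltnS leq_eqVlt => /orP [/eqP <- | q_ge2].
  split=> // N; have := Rpower_INR_ge1 N _ s_ge0.
  have : INR (smooth_count 2 N) <= 1 by apply/(le_INR _ 1)/leP/smooth_count2.
  nra.
have [gq_ge1 bound_q] := IHq q_ge2; have := gS q q_ge2.
have t_gt0 := Rpower_pos (INR q) (- s).
have t_le1 := Rpower_opp_le1 _ _ s_ge0 (INR_ge1 _ (ltnW q_ge2)).
move=> gq_le; have g_le : g q <= g q.+1 by nra.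
split; first lra.
case: (boolP (prime q)) => [q_pr | q_npr].
  by apply: smooth_count_prime_step => //; lra.
move=> N; rewrite smooth_countS_nonprime //; apply: Rle_trans (bound_q N) _.
by apply: Rmult_le_compat_r => //; exact/Rlt_le/Rpower_pos.
Qed.

Lemma exp13_one_sub_ge1 t : 0 <= t <= 12/13 -> 1 <= exp (13 * t) * (1 - t).
Proof.
by move=> t_bounds; have := exp_ineq1_le (13 * t); nra.
Qed.

Lemma Rpower_2_opp_eighth : Rpower 2 (- (1/8)) <= 12/13.
Proof.
have ge_13_12 : 13/12 <= Rpower 2 (1/8).
  have -> : 13/12 = Rpower ((13/12) ^ 8) (1/8).
    rewrite -Rpower_pow ?Rpower_mult; last lra.
    by rewrite (_ : INR 8 * (1/8) = 1) ?Rpower_1 //=; lra.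
  by apply: Rle_Rpower_l; [lra | split; [apply: pow_lt | rewrite /=]; lra].
rewrite Rpower_Ropp (_ : 12/13 = / (13/12)); last by field.
by apply: Rinv_le_contravar; lra.
Qed.

Definition capped_weight (W q : nat) : R :=
  INR (minn q W) + INR q * Rpower (INR W) (- (1/8)).

Lemma capped_weightS W q : (1 <= W)%N -> (1 <= q)%N ->
  capped_weight W q + Rpower (INR q) (- (1/8)) <= capped_weight W q.+1.
Proof.
move=> W_ge1 q_ge1; rewrite /capped_weight S_INR.
case: (leqP W q) => [le_Wq | lt_qW].
  rewrite (minn_idPr (leqW le_Wq)).
  have : Rpower (INR q) (- (1/8)) <= Rpower (INR W) (- (1/8)).
    apply: Rpower_opp_le; first lra.
    by split; [have := INR_ge1 _ W_ge1; lra | exact/le_INR/leP].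
  lra.
rewrite (minn_idPl lt_qW) S_INR.
have := Rpower_opp_le1 _ (1/8) (ltac:(lra)) (INR_ge1 _ q_ge1).
have := Rpower_pos (INR W) (- (1/8)); nra.
Qed.

Lemma exp_capped_weightS W q : (1 <= W)%N -> (2 <= q)%N ->
  exp (13 * capped_weight W q) <=
  exp (13 * capped_weight W q.+1) * (1 - Rpower (INR q) (- (1/8))).
Proof.
move=> W_ge1 q_ge2; set t := Rpower (INR q) (- (1/8)).
have t_ge0 : 0 <= t by exact/Rlt_le/Rpower_pos.
have t_le : t <= 12/13.
  apply: Rle_trans Rpower_2_opp_eighth; apply: Rpower_opp_le; first lra.
  by split; [lra | apply/(le_INR 2)/leP].
have := exp13_one_sub_ge1 _ (conj t_ge0 t_le).
have : 13 * (capped_weight W q + t) <= 13 * capped_weight W q.+1.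
  by have := capped_weightS _ _ W_ge1 (ltnW q_ge2); rewrite -/t; lra.
move/exp_le; rewrite Rmult_plus_distr_l exp_plus.
have := exp_pos (13 * capped_weight W q); nra.
Qed.

Lemma smooth_count_le_capped W q N : (1 <= W)%N -> (2 <= q)%N ->
  INR (smooth_count q N) <= exp (13 * capped_weight W q) * Rpower (INR N) (1/8).
Proof.
move=> W_ge1 q_ge2.
apply: (smooth_count_le_Rpower (1/8) (fun p => exp (13 * capped_weight W p))) => //.
- lra.
- rewrite -exp_0; apply: exp_le; rewrite /capped_weight.
  have := pos_INR (minn 2 W); have := Rpower_pos (INR W) (- (1/8)); simpl INR; nra.
- by move=> p p_ge2; exact: exp_capped_weightS.
Qed.

Lemma capped_weight_le W q a : 0 < a <= INR W ->
  capped_weight W q <= INR W + INR q * Rpower a (- (1/8)).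
Proof.
move=> a_W; rewrite /capped_weight.
have : INR (minn q W) <= INR W by apply/le_INR/leP/geq_minr.
have := Rpower_opp_le _ _ (1/8) (ltac:(lra)) a_W; have := pos_INR q; nra.
Qed.

Lemma ln_ln_lower l x : 1 <= l ->
  exp (Rpower 7 28 * Rpower (12 * exp 1 * l) (28 * ln (192 * exp 1 * l))) <= x ->
  28 * (5 + ln l) * (3 + ln l) <= ln (ln x).
Proof.
move=> l_ge1 x_ge; have e_gt0 := exp_pos 1; have e_le3 := exp_le_3.
have ln_l_ge0 := ln_ge0 _ l_ge1.
have ln7_ge0 : 0 <= ln 7 by apply: ln_ge0; lra.
have e2_le9 : exp 2 <= 9 by rewrite (_ : 2 = 1 + 1) ?exp_plus; nra.
have ln12_ge : 2 <= ln 12 by apply: exp_le_ln; lra.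
have ln192_ge : 4 <= ln 192.
  apply: exp_le_ln; rewrite (_ : 4 = 2 + 2); last lra; rewrite exp_plus.
  by have := exp_pos 2; nra.
have ln_mul c : 0 < c -> ln (c * exp 1 * l) = ln c + 1 + ln l.
  by move=> c_gt0; rewrite !ln_mult ?ln_exp //; nra.
have := ln_le _ _ (Rmult_lt_0_compat _ _ (Rpower_pos _ _) (Rpower_pos _ _)) (exp_le_ln _ _ x_ge).
rewrite ln_mult; try exact: Rpower_pos.
rewrite !ln_Rpower !ln_mul; try lra.
have : (5 + ln l) * (3 + ln l) <= (ln 192 + 1 + ln l) * (ln 12 + 1 + ln l).
  by apply: Rmult_le_compat; lra.
nra.
Qed.

(* [1248 = 52 * 24]: in [weight_estimate_lt] the weight term is at most
   [52 lam exp (15 lam / 16)] while [ln z / 8 >= exp lam / (24 l)]. *)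
Lemma exp_sixteenth_gt l lam : 1 <= l -> 28 * (5 + ln l) * (3 + ln l) <= lam ->
  1248 * l * lam < exp (lam / 16).
Proof.
move=> l_ge1 lam_ge; set b := ln l in lam_ge.
have b_ge0 : 0 <= b := ln_ge0 _ l_ge1.
have lam_ge' : 28 * (15 + 8 * b) <= lam by nra.
have ln2_le1 : ln 2 <= 1 by have := ln_le_sub1 2; lra.
have ln_lam : ln lam <= ln 64 + lam / 64 - 1.
  rewrite (_ : lam = 64 * (lam / 64)); last field.
  by rewrite ln_mult; try lra; have := ln_le_sub1 (lam / 64); lra.
have ln_consts : ln 1248 + ln 64 <= 17.
  rewrite -ln_mult; try lra; apply: Rle_trans (_ : ln (2 ^ 17) <= _).
    by apply: ln_le; rewrite /=; lra.
  by rewrite ln_pow; try lra; rewrite /=; lra.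
rewrite -(exp_ln (1248 * l * lam)); last nra.
apply: exp_increasing; rewrite (ln_mult (1248 * l)) ?(ln_mult 1248 l); try nra.
by rewrite -/b; lra.
Qed.

Lemma weight_estimate_lt l lam lz : 1 <= l -> 28 * (5 + ln l) * (3 + ln l) <= lam ->
  exp lam / (3 * l) <= lz ->
  13 * (exp (lam / 2) + 1 + (exp lam * lam + 1) * exp (- (lam / 16))) < lz / 8.
Proof.
move=> l_ge1 lam_ge lz_ge; have big := exp_sixteenth_gt _ _ l_ge1 lam_ge.
have ln_l_ge0 := ln_ge0 _ l_ge1.
have lam_ge1 : 1 <= lam by nra.
set F := exp (15 * lam / 16).
have F_ge1 : 1 <= F by rewrite /F -exp_0; apply: exp_le; lra.
have exp_lam : exp lam = exp (lam / 16) * F by rewrite /F -exp_plus; f_equal; field.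
have exp_lam_neg : exp lam * exp (- (lam / 16)) = F.
  by rewrite /F -exp_plus; f_equal; field.
have exp_half_le : exp (lam / 2) <= F by apply: exp_le; lra.
have exp_neg_le1 : exp (- (lam / 16)) <= 1 by rewrite -exp_0; apply: exp_le; lra.
have lhs_le : 13 * (exp (lam / 2) + 1 + (exp lam * lam + 1) * exp (- (lam / 16))) <=
              52 * lam * F.
  rewrite Rmult_plus_distr_r (Rmult_comm _ lam) Rmult_assoc exp_lam_neg Rmult_1_l; nra.
have rhs_gt : 52 * lam * F < exp lam / (24 * l).
  apply: (Rmult_lt_reg_r (24 * l)); first lra.
  rewrite (_ : exp lam / (24 * l) * (24 * l) = exp lam); last by field; lra.
  by rewrite exp_lam; have := exp_pos (lam / 16); nra.
have : exp lam / (24 * l) = exp lam / (3 * l) / 8 by field; lra.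
lra.
Qed.

Lemma smooth_count_lt_Rpower_quarter l L z (q N : nat) :
  1 <= l -> 0 < L -> 0 < z -> 28 * (5 + ln l) * (3 + ln l) <= ln L ->
  L / (3 * l) <= ln z -> L * ln L < INR q <= L * ln L + 1 -> INR N <= z ->
  INR (smooth_count q N) < Rpower z (1/4).
Proof.
move=> l_ge1 L_gt0 z_gt0 lnL_ge lnz_ge q_between N_le.
have ln_l_ge0 := ln_ge0 _ l_ge1.
set lam := ln L in lnL_ge q_between; have L_eq : L = exp lam by rewrite exp_ln.
rewrite L_eq in lnz_ge q_between; have exp_lam_ge := exp_ineq1_le lam.
have q_ge2 : (2 <= q)%N by apply/ltP/(INR_lt 1); rewrite /=; nra.
have [W [W_gt W_le]] := exists_nat_between (exp (lam / 2)) (Rlt_le _ _ (exp_pos _)).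
have W_ge1 : (1 <= W)%N by apply/ltP/(INR_lt 0); have := exp_pos (lam / 2); rewrite /=; lra.
have z_ge1 : 1 <= z.
  apply/Rlt_le/ln_lt_inv; rewrite ?ln_1; try lra.
  by apply: Rlt_le_trans lnz_ge; apply: Rdiv_lt_0_compat; [exact: exp_pos | lra].
have weight_lt : 13 * capped_weight W q < ln z / 8.
  apply: Rle_lt_trans (weight_estimate_lt _ _ _ l_ge1 lnL_ge lnz_ge).
  have := capped_weight_le W q _ (conj (exp_pos (lam / 2)) (Rlt_le _ _ W_gt)).
  rewrite /Rpower ln_exp (_ : - (1/8) * (lam / 2) = - (lam / 16)); last field.
  have := exp_pos (- (lam / 16)); have := pos_INR q; nra.
apply: Rle_lt_trans (smooth_count_le_capped W q N W_ge1 q_ge2) _.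
have -> : Rpower z (1/4) = exp (ln z / 8) * Rpower z (1/8).
  by rewrite /Rpower -exp_plus; f_equal; field.
apply: Rle_lt_trans (_ : _ <= exp (13 * capped_weight W q) * Rpower z (1/8)) _.
  by apply: Rmult_le_compat_l; [exact/Rlt_le/exp_pos | apply: Rpower_INR_le; lra].
by apply: Rmult_lt_compat_r; [exact: Rpower_pos | exact: exp_increasing].
Qed.

Theorem lemma10 (l x z : R) :
  1 <= l ->
  exp (Rpower 7 28 * Rpower (12 * exp 1 * l) (28 * ln (192 * exp 1 * l))) <= x ->
  Rpower x (1 / (3 * l)) <= z ->
  INR (count_upto z (fun n =>
         if Rlt_dec (INR (Pbig n)) (ln x * ln (ln x)) then true else false))
    < Rpower z (1 / 4).
Proof.
move=> l_ge1 x_ge z_ge; have lnlnx_ge := ln_ln_lower _ _ l_ge1 x_ge.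
have ln_l_ge0 := ln_ge0 _ l_ge1.
have lnx_gt0 : 0 < ln x.
  apply: Rlt_le_trans (exp_le_ln _ _ x_ge); apply: Rmult_lt_0_compat; exact: Rpower_pos.
have z_gt0 : 0 < z := Rlt_le_trans _ _ _ (Rpower_pos _ _) z_ge.
have lnz_ge : ln x / (3 * l) <= ln z.
  have := ln_le _ _ (Rpower_pos _ _) z_ge; rewrite ln_Rpower.
  by rewrite (_ : 1 / (3 * l) * ln x = ln x / (3 * l)) //; field; lra.
have [q q_between] := exists_nat_between (ln x * ln (ln x)) (ltac:(nra)).
have [N [N_le ->]] := count_upto_iota z (Rlt_le _ _ z_gt0).
apply: Rle_lt_trans _ (smooth_count_lt_Rpower_quarter _ _ _ q N l_ge1 lnx_gt0 z_gt0
                       lnlnx_ge lnz_ge q_between N_le).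
apply/le_INR/leP/sub_count => n; case: Rlt_dec => // lt_n _.
by apply/ltP/INR_lt; rewrite /Pbig in lt_n; lra.
Qed.
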